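(* Consider an instance with $n$ agents, $m$ items and binary additive valuations (notation as in the context). For each integer $d\ge0$ let $\gamma_d$ be a stable allocation of the sub-instance consisting of the agents $\mathsf{layer}_d$ and the items $\mathsf{Layer}_d$, treated as indivisible items, and for each integer $d\ge1$ let $\gamma^-_d$ be a stable fractional allocation of the sub-instance consisting of the agents $\mathsf{layer}^-_d$ and the items $\mathsf{Layer}^-_d$, treated as divisible items (valuations restricted to these items). Then the fractional allocation $\gamma$ of the whole instance obtained by combining all $\gamma_d$ and $\gamma^-_d$ (with items unallocated by $\chi^0$ left unallocated) is a stable fractional allocation of the whole instance with divisible items.
   Context: Agents $[n]$, items $[m]$; each agent $i$ has a set $L_i\subseteq[m]$ of liked items. Indivisible setting: an allocation $\chi=(\chi_1,\dots,\chi_n)$ is a tuple of pairwise disjoint subsets of $[m]$, clean if $\chi_i\subseteq L_i$, max-USW if it maximizes $\sum_i|\chi_i\cap L_i|$; allocations are clean and max-USW; $h_i=|\chi_i|$. Arc $(i,i')$, $i\ne i'$, if some $o\in\chi_i$ lies in $L_{i'}$; a transfer $u\to v$ is a simple directed path from $u$ to $v$ with at least one arc; narrowing if $h_u\ge h_v+2$; stable if no narrowing transfer. For integer $d\ge0$, $\mathsf{layer}_d$ is the set of agents $i$ with $|\chi_i|=d$ in every stable indivisible allocation; for integer $d\ge1$, $\mathsf{layer}^-_d$ is the set of agents $i$ with $\{|\chi_i|:\chi\text{ stable}\}=\{d-1,d\}$. Fix a stable indivisible allocation $\chi^0$ and let $\mathsf{Layer}_d=\bigcup_{i\in\mathsf{layer}_d}\chi^0_i$,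 $\mathsf{Layer}^-_d=\bigcup_{i\in\mathsf{layer}^-_d}\chi^0_i$. Divisible setting: a fractional allocation is $x=(x_{o,i})$ with $x_{o,i}\ge0$, $\sum_i x_{o,i}\le1$; clean if $x_{o,i}=0$ for $o\notin L_i$; max-USW if it maximizes $\sum_i\sum_{o\in L_i}x_{o,i}$; allocations are clean and max-USW; $h_i=\sum_o x_{o,i}$. A transfer $u\to v$: distinct agents $u=i_1,\dots,i_k=v$ ($k\ge2$), items $o_l$ with $x_{o_l,i_l}>0$, $o_l\in L_{i_{l+1}}$, amount $0<\Delta\le\min_l x_{o_l,i_l}$, moving $\Delta$ of $o_l$ from $i_l$ to $i_{l+1}$; narrowing if $h_u-\Delta\ge h_v+\Delta$; stable if no narrowing transfer. An indivisible allocation is viewed as a fractional one with entries in $\{0,1\}$. *)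

From HB Require Import structures.
From mathcomp Require Import all_boot all_order all_algebra.
From mathcomp Require Import boolp reals.
Set Implicit Arguments. Unset Strict Implicit. Unset Printing Implicit Defensive.
Import Order.TTheory GRing.Theory Num.Theory.
Local Open Scope ring_scope.

Section Alloc.
Variables (agent item : finType) (L : agent -> {set item}).

Definition ialloc (A : {set agent}) (B : {set item}) (chi : agent -> {set item}) :=
  [/\ forall i, i \notin A -> chi i = set0,
      forall i, chi i \subset B &
      forall i j, i != j -> [disjoint chi i & chi j]].

Definition iclean (A : {set agent}) (B : {set item}) (chi : agent -> {set item}) :=
  forall i, i \in A -> chi i \subset L i :&: B.

Definition iusw (A : {set agent}) (B : {set item}) (chi : agent -> {set item}) : nat :=
  (\sum_(i in A) #|chi i :&: (L i :&: B)|)%N.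

Definition imaxusw A B chi :=
  forall chi', ialloc A B chi' -> (iusw A B chi' <= iusw A B chi)%N.

Definition iarc (A : {set agent}) (B : {set item}) (chi : agent -> {set item}) : rel agent :=
  fun i i' => [&& i \in A, i' \in A, i != i' &
                  [exists o, (o \in chi i) && (o \in L i' :&: B)]].

Definition itransfer A B chi (u v : agent) :=
  exists p : seq agent,
    [/\ p != [::], path (iarc A B chi) u p, uniq (u :: p) & last u p = v].

Definition istable A B chi :=
  [/\ ialloc A B chi, iclean A B chi, imaxusw A B chi &
      forall u v, itransfer A B chi u v -> ~~ (#|chi v| + 2 <= #|chi u|)%N].

Variable R : realType.

(* x o i = amount of item o given to agent i *)
Definition falloc (A : {set agent}) (B : {set item}) (x : item -> agent -> R) :=
  [/\ forall o i, 0 <= x o i,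
      forall o, \sum_(i in A) x o i <= 1 &
      forall o i, (i \notin A) || (o \notin B) -> x o i = 0].

Definition fclean (A : {set agent}) (B : {set item}) (x : item -> agent -> R) :=
  forall o i, o \notin L i :&: B -> x o i = 0.

Definition fusw (A : {set agent}) (B : {set item}) (x : item -> agent -> R) : R :=
  \sum_(i in A) \sum_(o in L i :&: B) x o i.

Definition fmaxusw A B x :=
  forall y, falloc A B y -> fusw A B y <= fusw A B x.

Definition fh (x : item -> agent -> R) (i : agent) : R := \sum_o x o i.

(* a transfer u = i_1, ..., i_k = v (k >= 2, distinct agents), encoded as the
   list of steps (o_l, i_{l+1}); each step moves Delta of o_l from i_l to
   i_{l+1}, where x_{o_l,i_l} >= Delta > 0 and o_l is liked by i_{l+1} *)
Definition ftransfer (A : {set agent}) (B : {set item}) (x : item -> agent -> R)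
    (u v : agent) (Delta : R) :=
  exists s : seq (item * agent),
    [/\ s != [::], uniq (u :: map snd s), last u (map snd s) = v,
        all (mem A) (u :: map snd s) & 0 < Delta] /\
        (forall a o b, (a, (o, b)) \in zip (u :: map snd s) s ->
          0 < x o a /\ Delta <= x o a /\ o \in L b :&: B).

Definition fstable A B x :=
  [/\ falloc A B x, fclean A B x, fmaxusw A B x &
      forall u v Delta, ftransfer A B x u v Delta ->
        ~ (fh x v + Delta <= fh x u - Delta)].

End Alloc.

Section Layers.
Variables (agent item : finType) (L : agent -> {set item}).

Definition wstable (chi : agent -> {set item}) := istable L setT setT chi.

Definition layer (d : nat) : {set agent} :=
  [set i | `[< forall chi, wstable chi -> #|chi i| = d >]].

Definition layerm (d : nat) : {set agent} :=
  [set i | `[< (forall chi, wstable chi -> #|chi i| = d.-1 \/ #|chi i| = d)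
             /\ (exists chi, wstable chi /\ #|chi i| = d.-1)
             /\ (exists chi, wstable chi /\ #|chi i| = d) >]].

Definition Layer (chi0 : agent -> {set item}) (d : nat) : {set item} :=
  \bigcup_(i in layer d) chi0 i.

Definition Layerm (chi0 : agent -> {set item}) (d : nat) : {set item} :=
  \bigcup_(i in layerm d) chi0 i.

(* Layers with d > #|item| are empty (any bundle has
   at most #|item| items), so summing over d <= #|item| covers all of them. *)
Definition combine (R : realType) (gam : nat -> agent -> {set item})
    (gamm : nat -> item -> agent -> R) : item -> agent -> R :=
  fun o i => \sum_(0 <= d < #|item|.+1) ((o \in gam d i)%:R : R)
           + \sum_(1 <= d < #|item|.+1) gamm d o i.

End Layers.

From HB Require Import structures.
From mathcomp Require Import all_boot all_order all_algebra.
From mathcomp Require Import boolp reals.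
From mathcomp Require Import zify lra.
Import Order.TTheory GRing.Theory Num.Theory.
Set Implicit Arguments. Unset Strict Implicit. Unset Printing Implicit Defensive.

(* Stable indivisible allocations of the whole instance are exactly the max-USW
   allocations minimising the potential sum_i |chi_i|^2: passing one item along
   each arc of a path from u to v changes the potential by 2 (|chi_v| - |chi_u| + 1).
   Comparing two max-USW allocations along exchange paths then shows that two
   stable allocations differ by at most one at every agent, so the sizes of an
   agent form a range {d} or {d-1, d} (its stratum layer_d or layer^-_d), and if
   chi0 gives k an item liked by b, the range of b equals that of k or lies
   entirely above it.  Inside a stratum the same exchange argument against chi0
   shows that gamma_d gives every agent exactly d items and gamma^-_d between d-1
   and d.  Hence holdings never decrease along a transfer path of gamma: within a
   stratum by stability of gamma^-_d, across strata by these bounds.  Finally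
   gamma is max-USW since it allocates every liked item completely. *)

Local Open Scope ring_scope.

Lemma connect_uniq_path (T : finType) (e : rel T) u v :
  connect e u v -> exists p, [/\ path e u p, uniq (u :: p) & last u p = v].
Proof.
case/connectP => p pth lst; case/shortenP: pth lst => p' pth uq _ lst.
by exists p'.
Qed.

Lemma uniq_last_neq (T : eqType) (u : T) p : uniq (u :: p) -> p != [::] -> last u p != u.
Proof.
case: p => [//|y p] /= /andP[]; rewrite inE negb_or => /andP[uy up] _ _.
by apply: contraTneq (mem_last y p) => ->; rewrite inE negb_or uy.
Qed.

Section Exchange.
Variables (agent item : finType) (R : realDomainType).
Implicit Types x y : item -> agent -> R.

Definition exchange x y : rel agent :=
  fun a b => (a != b) && [exists o, (0 < x o a) && (0 < y o b)].

(* Every item that x places in the set S of agents reachable from i is placed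
   by y entirely inside S, so S holds no more under x than under y. *)
Lemma exchange_deficit x y :
  (forall o a, 0 <= x o a) -> (forall o a, 0 <= y o a) ->
  (forall o, \sum_a x o a <= \sum_a y o a) ->
  forall i, \sum_o y o i < \sum_o x o i ->
  exists2 k, \sum_o x o k < \sum_o y o k & connect (exchange x y) i k.
Proof.
move=> x_ge0 y_ge0 col_le i hi.
set S := [set b | connect (exchange x y) i b].
have y_in_S o a : a \in S -> 0 < x o a -> \sum_(b in S) y o b = \sum_b y o b.
  move=> aS xa; rewrite [RHS](bigID (mem S)) /= [X in _ = _ + X]big1 ?addr0 // => b bS.
  apply/eqP; rewrite eq_le y_ge0 andbT leNgt; apply: contra bS => yb.
  rewrite !inE in aS *; apply: connect_trans aS _.
  have [->//|ab] := eqVneq a b; apply: connect1.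
  by rewrite /exchange ab; apply/existsP; exists o; rewrite xa yb.
have S_le : \sum_(a in S) \sum_o x o a <= \sum_(a in S) \sum_o y o a.
  rewrite (exchange_big _ _ _ (mem S)) [leRHS](exchange_big _ _ _ (mem S)) /=.
  apply: ler_sum => o _.
  have [/exists_inP[a aS xa]|] := boolP [exists a in S, 0 < x o a].
    rewrite (y_in_S o a) //; apply: le_trans (col_le o).
    by rewrite [leRHS](bigID (mem S)) /= lerDl sumr_ge0.
  rewrite negb_exists_in => /forall_inP x0; rewrite big1 ?sumr_ge0 // => a aS.
  by apply/eqP; rewrite eq_le x_ge0 andbT leNgt x0.
have [/exists_inP[k kS hk]|] := boolP [exists k in S, \sum_o x o k < \sum_o y o k].
  by exists k; rewrite // inE in kS.
rewrite negb_exists_in => /forall_inP no_deficit; exfalso.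
have iS : i \in S by rewrite inE connect0.
move: S_le; apply/negP; rewrite -ltNge.
rewrite (bigD1 i) //= [X in _ < X](bigD1 i) //= ltr_leD //.
by apply: ler_sum => a /andP[aS _]; rewrite leNgt no_deficit.
Qed.

End Exchange.

Section Bundles.
Variables (agent item : finType) (R : numDomainType).
Implicit Types chi : agent -> {set item}.

Definition indicator chi : item -> agent -> R := fun o a => (o \in chi a)%:R.

Lemma indicator_ge0 chi o a : 0 <= indicator chi o a.
Proof. exact: ler0n. Qed.

Lemma indicator_gt0 chi o a : (0 < indicator chi o a) = (o \in chi a).
Proof. by rewrite /indicator; case: (o \in chi a); rewrite ?ltr01 ?ltxx. Qed.

Lemma row_indicator chi a : \sum_o indicator chi o a = #|chi a|%:R.
Proof.
rewrite /indicator -sum1_card natr_sum [RHS]big_mkcond.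
by apply: eq_bigr => o _; case: (o \in chi a).
Qed.

Definition disjoint_bundles chi := forall i j, i != j -> [disjoint chi i & chi j].

Lemma disjoint_bundles_eq chi o i j :
  disjoint_bundles chi -> o \in chi i -> o \in chi j -> i = j.
Proof.
move=> D oi oj; apply/eqP; apply: contraT => ij.
by rewrite (disjointFr (D i j ij) oi) in oj.
Qed.

Lemma sum_indicator chi o :
  disjoint_bundles chi -> \sum_a indicator chi o a = ([exists a, o \in chi a] : nat)%:R.
Proof.
move=> D; have [b ob|none] := pickP (fun a => o \in chi a).
  have -> : [exists a, o \in chi a] by apply/existsP; exists b.
  rewrite (bigD1 b) //= big1 ?addr0; first by rewrite /indicator ob.
  move=> a ab; rewrite /indicator; have [oa|//] := boolP (o \in chi a).
  by rewrite (disjoint_bundles_eq D oa ob) eqxx in ab.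
have -> : [exists a, o \in chi a] = false by apply/existsP => -[a]; rewrite none.
by rewrite big1 // => a _; rewrite /indicator none.
Qed.

End Bundles.

Section FractionalArcs.
Variables (agent item : finType) (L : agent -> {set item}) (R : numDomainType).
Implicit Types (A : {set agent}) (B : {set item}) (x : item -> agent -> R).

Definition farc A B x : rel agent :=
  fun a b => [&& a \in A, b \in A, a != b & [exists o, (0 < x o a) && (o \in L b :&: B)]].

Lemma iarc_farc A B (chi : agent -> {set item}) : iarc L A B chi =2 farc A B (indicator R chi).
Proof.
move=> a b; congr [&& _, _, _ & _].
by apply: eq_existsb => o; rewrite indicator_gt0.
Qed.

End FractionalArcs.

Section Stability.
Variables (agent item : finType) (L : agent -> {set item}) (R : realType).
Implicit Types (A : {set agent}) (B : {set item}) (chi : agent -> {set item}).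
Implicit Types x : item -> agent -> R.

Lemma istable_connect A B chi u v :
  istable L A B chi -> connect (iarc L A B chi) u v -> (#|chi u| <= #|chi v| + 1)%N.
Proof.
case=> _ _ _ no_narrowing; have [-> _|uv] := eqVneq u v; first exact: leq_addr.
case/connect_uniq_path => p' [pth uq lst].
have /no_narrowing : itransfer L A B chi u v.
  by exists p'; split => //; apply: contraNneq uv => p0; rewrite -lst p0.
by rewrite -ltnNge; lia.
Qed.

(* Otherwise moving min(x o a, (fh x a - fh x b) / 2) of o from a to b is narrowing. *)
Lemma fstable_arc A B x a b : fstable L A B x -> farc L A B x a b -> fh x a <= fh x b.
Proof.
case=> _ _ _ no_narrowing /and4P[aA bA ab /existsP[o /andP[xo oL]]].
rewrite leNgt; apply/negP => lt.
pose D := Num.min (x o a) ((fh x a - fh x b) / 2).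
have D_gt0 : 0 < D by rewrite lt_min xo divr_gt0 // subr_gt0.
have D_le : 2 * D <= fh x a - fh x b by rewrite -ler_pdivlMl // mulrC ge_min lexx orbT.
apply: (no_narrowing a b D); last by lra.
exists [:: (o, b)]; split; first by rewrite /= inE ab aA bA.
by move=> a' o' b'; rewrite /= inE => /eqP[-> -> ->]; rewrite ge_min lexx.
Qed.

Lemma fstable_connect A B x u v :
  fstable L A B x -> connect (farc L A B x) u v -> fh x u <= fh x v.
Proof.
move=> st /connectP[p pth ->]; elim: p u pth => [|w p IH] u //= /andP[uw pth].
exact: le_trans (fstable_arc st uw) (IH _ pth).
Qed.

Definition add_item chi a o : agent -> {set item} :=
  fun i => if i == a then o |: chi a else chi i.

Lemma add_item_ialloc A B chi a o : ialloc A B chi -> a \in A -> o \in B ->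
  (forall b, o \notin chi b) -> ialloc A B (add_item chi a o).
Proof.
move=> [out sub D] aA oB unowned; rewrite /add_item.
have Da j : j != a -> [disjoint o |: chi a & chi j].
  move=> ja; rewrite disjoint_subset; apply/subsetP => p; rewrite !inE.
  case/orP=> [/eqP->|pa]; first exact: unowned.
  by rewrite (disjointFr (D a j _) pa) // eq_sym.
split=> [i iA|i|i j ij].
- by case: eqP => [ia|_]; [rewrite ia aA in iA | exact: out].
- by case: eqP => _ //; rewrite subUset sub1set oB sub.
case: (eqVneq i a) => [ia|ia]; case: (eqVneq j a) => [ja|ja].
- by rewrite ia ja eqxx in ij.
- exact: Da.
- by rewrite disjoint_sym Da.
- exact: D.
Qed.

Lemma imaxusw_cover A B chi o a : ialloc A B chi -> imaxusw L A B chi ->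
  o \in B -> a \in A -> o \in L a -> exists b, o \in chi b.
Proof.
move=> al M oB aA oL; apply/existsP; apply: contraT; rewrite negb_exists => /forallP unowned.
have := M _ (add_item_ialloc al aA oB unowned).
rewrite /iusw (bigD1 a) //= [X in (_ <= X)%N](bigD1 a) //= /add_item eqxx.
under eq_bigr => i /andP[_ /negbTE ->] do [].
rewrite setIUl (setIidPl _) ?sub1set ?inE ?oL ?oB // cardsU1 !inE (negbTE (unowned a)); lia.
Qed.

Lemma falloc_sum A B x o : falloc A B x -> \sum_i x o i = \sum_(i in A) x o i.
Proof.
case=> _ _ supp; rewrite (bigID (mem A)) /= [X in _ + X]big1 ?addr0 // => i iA.
by apply: supp; rewrite iA.
Qed.

(* Otherwise topping up a with the missing share 1 - s of o raises the welfare. *)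
Lemma fmaxusw_cover A B x o a : falloc A B x -> fmaxusw L A B x ->
  o \in B -> a \in A -> o \in L a -> \sum_i x o i = 1.
Proof.
move=> al M oB aA oL; have [x_ge0 col_le1 supp] := al.
rewrite (falloc_sum o al); apply/eqP; rewrite eq_le col_le1 leNgt; apply/negP => lt1.
set s := \sum_(i in A) x o i in lt1.
pose y o' i := x o' i + ((o' == o) && (i == a))%:R * (1 - s).
have y_al : falloc A B y.
  split=> [o' i|o'|o' i out].
  - by rewrite addr_ge0 // mulr_ge0 // subr_ge0 ltW.
  - rewrite big_split /=; have [->|o'o] := eqVneq o' o; last first.
      by rewrite [X in _ + X]big1 ?addr0 // => i _; rewrite mul0r.
    rewrite [X in _ + X](bigD1 a) //= eqxx mul1r [X in _ + (_ + X)]big1 ?addr0 -/s.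
      by lra.
    by move=> i /andP[_ /negbTE ->]; rewrite mul0r.
  - rewrite /y supp //; case: eqP => [oo|]; case: eqP => [ia|] //=; rewrite ?mul0r ?addr0 //.
    by rewrite oo ia aA oB in out.
have gain : \sum_(i in A) \sum_(o' in L i :&: B)
              ((o' == o) && (i == a))%:R * (1 - s) = 1 - s.
  rewrite (bigD1 a) //= (bigD1 o) ?inE ?oL ?oB //= !eqxx mul1r.
  rewrite big1 => [|o' /andP[_ /negbTE ->]]; last by rewrite mul0r.
  rewrite big1 ?addr0 // => i /andP[_ /negbTE ia].
  by rewrite big1 // => o' _; rewrite ia andbF mul0r.
have := M y y_al; rewrite /fusw /y.
under eq_bigr do rewrite big_split /=.
by rewrite big_split /= gain; lra.
Qed.

End Stability.

Section WholeInstance.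
Variables (agent item : finType) (L : agent -> {set item}).
Implicit Types chi psi : agent -> {set item}.

Local Notation warc := (iarc L [set: agent] [set: item]).

Definition wvalid chi :=
  ialloc [set: agent] [set: item] chi /\ iclean L [set: agent] [set: item] chi.

Definition wmax chi := wvalid chi /\ imaxusw L [set: agent] [set: item] chi.

Definition shifted chi chi' u v :=
  forall i, (#|chi' i| + (i == u) = #|chi i| + (i == v))%N.

Lemma wstable_wmax chi : wstable L chi -> wmax chi.
Proof. by case. Qed.

Lemma wvalid_clean chi o a : wvalid chi -> o \in chi a -> o \in L a.
Proof.
by case=> _ cl oa; have /subsetP/(_ o oa) := cl a (in_setT a); rewrite inE => /andP[].
Qed.

Lemma wstable_clean chi o a : wstable L chi -> o \in chi a -> o \in L a.
Proof. by case=> al cl _ _; apply: wvalid_clean (conj al cl). Qed.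

Definition move_item chi u v o : agent -> {set item} :=
  fun i => if i == u then chi u :\ o else if i == v then o |: chi v else chi i.

Lemma move_item_id chi u v o i : i != u -> i != v -> move_item chi u v o i = chi i.
Proof. by rewrite /move_item => /negbTE -> /negbTE ->. Qed.

Section MoveItem.
Variables (chi : agent -> {set item}) (u v : agent) (o : item).
Hypotheses (chi_valid : wvalid chi) (ou : o \in chi u) (uv : u != v).

Let chi_disjoint : disjoint_bundles chi.
Proof. by case: chi_valid => -[]. Qed.

Lemma move_item_mem p i :
  (p \in move_item chi u v o i) = if p == o then i == v else p \in chi i.
Proof.
rewrite /move_item; have [->|po] := eqVneq p o.
  have [->|iu] := eqVneq i u; first by rewrite !inE eqxx (negbTE uv).
  have [//|iv] := eqVneq i v; first by rewrite !inE eqxx.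
  by apply/negP => oi; rewrite (disjoint_bundles_eq chi_disjoint oi ou) eqxx in iu.
have [->|iu] := eqVneq i u; first by rewrite !inE po.
by have [->|//] := eqVneq i v; rewrite !inE (negbTE po).
Qed.

Lemma move_item_valid : o \in L v -> wvalid (move_item chi u v o).
Proof.
move=> ov; have [_ cl] := chi_valid.
split; first split=> [i|i|i j ij]; rewrite ?inE ?subsetT //.
- rewrite disjoint_subset; apply/subsetP => p; rewrite !inE !move_item_mem.
  case: eqP => [_ /eqP iv|_ pi]; first by apply: contraNN ij => /eqP->; rewrite iv.
  by apply: contraNN ij => pj; rewrite (disjoint_bundles_eq chi_disjoint pi pj).
- move=> i _; apply/subsetP => p; rewrite move_item_mem.
  case: eqP => [-> /eqP ->|_ pi]; first by rewrite !inE ov.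
  by have /subsetP := cl i (in_setT i); apply.
Qed.

Lemma move_item_card : shifted chi (move_item chi u v o) u v.
Proof.
move=> i; rewrite /move_item; have [->|iu] := eqVneq i u.
  by rewrite (negbTE uv) (cardsD1 o (chi u)) ou; lia.
have [->|//] := eqVneq i v.
have ov : o \notin chi v.
  by apply: contraNN uv => ov; rewrite (disjoint_bundles_eq chi_disjoint ou ov).
by rewrite cardsU1 ov; lia.
Qed.

End MoveItem.

(* Every agent on the path passes one item to its successor, so only the endpoints
   change size. *)
Lemma shift_path p : forall u chi, wvalid chi -> path (warc chi) u p -> uniq (u :: p) ->
  exists chi', [/\ wvalid chi', shifted chi chi' u (last u p) &
                   forall i, i \notin u :: p -> chi' i = chi i].
Proof.
elim: p => [|v p IH] u chi valid; first by exists chi; split=> // i; rewrite addnC.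
rewrite /= => /andP[uv_arc pth] /andP[u_notin uq].
have [chi1 [valid1 shift1 same1]] := IH v chi valid pth uq.
case/and4P: uv_arc => _ _ uv /existsP[o /andP[ou]]; rewrite inE => /andP[ov _].
rewrite -(same1 u u_notin) in ou.
exists (move_item chi1 u v o); split.
- exact: move_item_valid.
- move=> i; have := move_item_card valid1 ou uv i; have := shift1 i; lia.
- move=> i; rewrite !inE !negb_or => /and3P[iu iv ip].
  by rewrite move_item_id // same1 // inE negb_or iv.
Qed.

Lemma wmax_cover chi o : wmax chi -> [exists a, o \in chi a] = [exists a, o \in L a].
Proof.
move=> [[al cl] M]; apply/existsP/existsP => -[a oa].
  by exists a; apply: wvalid_clean oa.
exact: imaxusw_cover al M (in_setT o) (in_setT a) oa.
Qed.

Lemma sum_indicator_wmax (R : numDomainType) chi psi o : wmax chi -> wmax psi ->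
  \sum_a indicator R chi o a = \sum_a indicator R psi o a.
Proof.
move=> mchi mpsi; rewrite !sum_indicator ?wmax_cover //.
  by case: mpsi => -[[]].
by case: mchi => -[[]].
Qed.

Lemma iusw_wvalid chi : wvalid chi -> iusw L [set: agent] [set: item] chi = (\sum_a #|chi a|)%N.
Proof.
case=> _ cl; apply: eq_big => [a|a _]; first by rewrite inE.
by rewrite (setIidPl (cl a (in_setT a))).
Qed.

Lemma sum_eq1 (u : agent) : (\sum_i ((i == u) : nat))%N = 1%N.
Proof. by rewrite (bigD1 u) //= eqxx big1 // => i /negbTE ->. Qed.

Lemma sum_shift (f g : agent -> nat) u v :
  (forall i, g i + (i == u) = f i + (i == v))%N -> (\sum_i g i = \sum_i f i)%N.
Proof.
move=> fg; have : (\sum_i (g i + (i == u)) = \sum_i (f i + (i == v)))%N by apply: eq_bigr.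
by rewrite !big_split /= !sum_eq1 => /addIn.
Qed.

Lemma sum_sq_shift (f g : agent -> nat) u v : u != v ->
  (forall i, g i + (i == u) = f i + (i == v))%N ->
  (\sum_i g i * g i + 2 * f u = \sum_i f i * f i + 2 * f v + 2)%N.
Proof.
move=> uv fg; have gu := fg u; have gv := fg v.
rewrite eqxx (negbTE uv) in gu; rewrite eqxx eq_sym (negbTE uv) in gv.
have vu : v != u by rewrite eq_sym.
rewrite [X in (X + _)%N](bigD1 u) //= [X in (_ + X + _)%N](bigD1 v) //=.
rewrite [X in (_ = X + _ + _)%N](bigD1 u) //= [X in (_ = _ + X + _ + _)%N](bigD1 v) //=.
have -> : (\sum_(i | (i != u) && (i != v)) g i * g i =
           \sum_(i | (i != u) && (i != v)) f i * f i)%N.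
  by apply: eq_bigr => i /andP[/negbTE iu /negbTE iv]; have := fg i; rewrite iu iv !addn0 => ->.
nia.
Qed.

Lemma shift_wmax chi chi' u v : wmax chi -> wvalid chi' -> shifted chi chi' u v -> wmax chi'.
Proof.
move=> [valid M] valid' sh; split=> // psi al.
by rewrite (iusw_wvalid valid') (sum_shift sh) -(iusw_wvalid valid); apply: M.
Qed.

Definition potential chi := (\sum_i #|chi i| * #|chi i|)%N.

Lemma potential_shift chi chi' u v : u != v -> shifted chi chi' u v ->
  (potential chi' + 2 * #|chi u| = potential chi + 2 * #|chi v| + 2)%N.
Proof. exact: sum_sq_shift. Qed.

Lemma wmax_exchange chi psi i : wmax chi -> wmax psi -> (#|psi i| < #|chi i|)%N ->
  exists k, [/\ (#|chi k| < #|psi k|)%N, connect (warc chi) i k & connect (warc psi) k i].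
Proof.
move=> mchi mpsi lt_i; set x := indicator int chi; set y := indicator int psi.
have col o : \sum_a x o a <= \sum_a y o a by rewrite /x /y (sum_indicator_wmax _ _ mchi mpsi).
have lt_row : \sum_o y o i < \sum_o x o i by rewrite /x /y !row_indicator ltr_nat.
have [k lt_k ik] := exchange_deficit (indicator_ge0 int chi) (indicator_ge0 int psi) col lt_row.
exists k; split; first by rewrite -(ltr_nat int) -!row_indicator.
  apply: connect_sub ik => a b /andP[ab /existsP[o]]; rewrite !indicator_gt0 => /andP[oa ob].
  apply: connect1; rewrite /iarc !inE ab; apply/existsP; exists o.
  by rewrite oa !inE (wvalid_clean mpsi.1 ob).
have := connect_rev (exchange x y) k i; rewrite /= ik => ki.
apply: connect_sub ki => b a /andP[ab /existsP[o]]; rewrite !indicator_gt0 => /andP[oa ob].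
apply: connect1; rewrite /iarc !inE eq_sym ab; apply/existsP; exists o.
by rewrite ob !inE (wvalid_clean mchi.1 oa).
Qed.

Lemma warc_liked chi o k b : o \in chi k -> o \in L b -> b != k -> warc chi k b.
Proof.
move=> ok ob bk; rewrite /iarc !inE eq_sym bk.
by apply/existsP; exists o; rewrite ok !inE ob.
Qed.

Lemma wstable_connect chi u v :
  wstable L chi -> connect (warc chi) u v -> (#|chi u| <= #|chi v| + 1)%N.
Proof. exact: istable_connect. Qed.

Lemma connect_shift chi u v : wvalid chi -> connect (warc chi) u v ->
  exists chi', wvalid chi' /\ shifted chi chi' u v.
Proof.
move=> valid /connect_uniq_path[p [pth uq <-]].
by have [chi' [valid' sh _]] := shift_path valid pth uq; exists chi'.
Qed.

(* Moving a unit towards chi along an exchange path never increases the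
   potential, and strictly decreases the distance to chi. *)
Lemma wstable_potential_min chi psi :
  wstable L chi -> wmax psi -> (potential chi <= potential psi)%N.
Proof.
move=> st; have mchi := wstable_wmax st.
pose dist psi := (\sum_a ((#|chi a| - #|psi a|) + (#|psi a| - #|chi a|)))%N.
suff min_below N : forall psi,
    (dist psi < N)%N -> wmax psi -> (potential chi <= potential psi)%N.
  exact: min_below.
elim: N => [//|N IH] {}psi lt_dist mpsi.
have [i lt_i|ge] := pickP (fun i => #|psi i| < #|chi i|)%N; last first.
  by apply: leq_sum => a _; have := ge a; rewrite /= ltnNge => /negbFE le; apply: leq_mul.
have [k [lt_k ik ki]] := wmax_exchange mchi mpsi lt_i.
have k_i : k != i by apply: contraTneq lt_k => ->; rewrite -leqNgt ltnW.
have [psi' [valid' sh]] := connect_shift mpsi.1 ki.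
have ik_le := wstable_connect st ik.
have pot := potential_shift k_i sh.
have closer : (dist psi' < dist psi)%N.
  have : (\sum_a ((#|chi a| - #|psi' a|) + (#|psi' a| - #|chi a|) + (a == k)) <= dist psi)%N.
    apply: leq_sum => a _; have := sh a.
    have [->|ak] := eqVneq a k; first by rewrite (negbTE k_i); lia.
    by have [->|ai] := eqVneq a i; lia.
  by rewrite big_split /= sum_eq1 addn1.
have := IH psi' (leq_trans closer lt_dist) (shift_wmax mpsi valid' sh).
rewrite /potential in pot *; lia.
Qed.

Lemma potential_min_wstable chi : wmax chi ->
  (forall psi, wmax psi -> (potential chi <= potential psi)%N) -> wstable L chi.
Proof.
move=> mchi min_chi; have [[al cl] M] := mchi.
split=> // u v [p [p_nonempty pth uq lst]].
have [chi' [valid' sh _]] := shift_path (conj al cl) pth uq; rewrite lst in sh.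
have uv : u != v by rewrite -lst eq_sym uniq_last_neq.
have := potential_shift uv sh; have := min_chi chi' (shift_wmax mchi valid' sh).
rewrite -ltnNge; lia.
Qed.

Lemma wstable_shift chi u v : wstable L chi -> connect (warc chi) u v -> u != v ->
  #|chi u| = (#|chi v| + 1)%N -> exists2 chi', wstable L chi' & shifted chi chi' u v.
Proof.
move=> st uv_conn uv size_uv.
have [chi' [valid' sh]] := connect_shift (wstable_wmax st).1 uv_conn.
have mchi' := shift_wmax (wstable_wmax st) valid' sh.
exists chi' => //; apply: potential_min_wstable => // psi mpsi.
have := wstable_potential_min st mpsi; have := potential_shift uv sh; lia.
Qed.

Lemma wstable_width chi psi a :
  wstable L chi -> wstable L psi -> (#|chi a| <= #|psi a| + 1)%N.
Proof.
move=> st_chi st_psi; rewrite leqNgt; apply/negP => lt.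
have lt' : (#|psi a| < #|chi a|)%N by lia.
have [k [lt_k ak ka]] := wmax_exchange (wstable_wmax st_chi) (wstable_wmax st_psi) lt'.
by have := wstable_connect st_chi ak; have := wstable_connect st_psi ka; lia.
Qed.

Lemma wstable_raise chi c b n : wstable L chi -> connect (warc chi) c b ->
  (n <= #|chi c|)%N -> exists2 phi, wstable L phi & (n <= #|phi b|)%N.
Proof.
move=> st cb le_n; have [le_b|lt_b] := leqP n #|chi b|; first by exists chi.
have c_b : c != b by apply: contraTneq lt_b => <-; rewrite -leqNgt.
have le_cb := wstable_connect st cb.
have size_cb : #|chi c| = (#|chi b| + 1)%N by lia.
have [phi st_phi sh] := wstable_shift st cb c_b size_cb.
by exists phi => //; have := sh b; rewrite eqxx eq_sym (negbTE c_b); lia.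
Qed.

Lemma wstable_lower chi c b n : wstable L chi -> connect (warc chi) c b ->
  (#|chi b| <= n)%N -> exists2 phi, wstable L phi & (#|phi c| <= n)%N.
Proof.
move=> st cb le_n; have [le_c|lt_c] := leqP #|chi c| n; first by exists chi.
have c_b : c != b by apply: contraTneq lt_c => ->; rewrite -leqNgt.
have le_cb := wstable_connect st cb.
have size_cb : #|chi c| = (#|chi b| + 1)%N by lia.
have [phi st_phi sh] := wstable_shift st cb c_b size_cb.
by exists phi => //; have := sh c; rewrite eqxx (negbTE c_b); lia.
Qed.

End WholeInstance.

Section SizeRanges.
Variables (agent item : finType) (L : agent -> {set item}).
Variable chi0 : agent -> {set item}.
Hypothesis chi0_stable : wstable L chi0.

Definition size_range a lo hi :=
  [/\ forall psi, wstable L psi -> (lo <= #|psi a| <= hi)%N,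
      exists psi, wstable L psi /\ #|psi a| = lo &
      exists psi, wstable L psi /\ #|psi a| = hi].

Lemma range_width a lo hi : size_range a lo hi -> (lo <= hi <= lo + 1)%N.
Proof.
case=> within [psi1 [st1 lo_e]] [psi2 [st2 hi_e]].
by have := within _ st2; have := wstable_width a st2 st1; lia.
Qed.

Lemma range_uniq a lo hi lo' hi' :
  size_range a lo hi -> size_range a lo' hi' -> lo = lo' /\ hi = hi'.
Proof.
case=> within [psi1 [st1 e1]] [psi2 [st2 e2]] [within' [phi1 [t1 f1]] [phi2 [t2 f2]]].
by have := within _ t1; have := within _ t2; have := within' _ st1; have := within' _ st2; lia.
Qed.

Lemma range_exists a : exists lo hi, size_range a lo hi.
Proof.
set c := #|chi0 a|.
have [[psi [st_psi ne]]|same] := pselect (exists psi, wstable L psi /\ #|psi a| != c).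
  have psi_c := wstable_width a st_psi chi0_stable.
  have c_psi := wstable_width a chi0_stable st_psi.
  have sizes phi : wstable L phi -> #|phi a| = c \/ #|phi a| = #|psi a|.
    move=> st; have := wstable_width a st chi0_stable; have := wstable_width a chi0_stable st.
    by have := wstable_width a st st_psi; have := wstable_width a st_psi st; move: ne; lia.
  have [psi_lt|psi_gt|eq] := ltngtP #|psi a| c; last by rewrite eq eqxx in ne.
  + exists #|psi a|, c; split; [|by exists psi|by exists chi0].
    by move=> phi /sizes[]->; lia.
  + exists c, #|psi a|; split; [|by exists chi0|by exists psi].
    by move=> phi /sizes[]->; lia.
exists c, c; split; try by exists chi0.
move=> phi st; have /eqP -> : #|phi a| == c; last by rewrite leqnn.
by apply: contraT => ne; case: same; exists phi.
Qed.

Lemma layer_range a d : a \in layer L d -> size_range a d d.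
Proof.
rewrite inE => /asboolP size_d; split; try by exists chi0; split; last exact: size_d.
by move=> psi /size_d ->; rewrite leqnn.
Qed.

Lemma range_layer a d : size_range a d d -> a \in layer L d.
Proof. by case=> within _ _; rewrite inE; apply/asboolP => psi /within; lia. Qed.

Lemma layerm_range a d : a \in layerm L d.+1 -> size_range a d d.+1.
Proof. by rewrite inE => /asboolP[sizes [lo hi]]; split=> // psi /sizes[]->; lia. Qed.

Lemma range_layerm a d : size_range a d d.+1 -> a \in layerm L d.+1.
Proof. by case=> within lo hi; rewrite inE; apply/asboolP; split=> // psi /within; lia. Qed.

(* In both lemmas the witness is chi0 or a shift of chi0 along an arc path. *)
Lemma liked_item_raise o k b psi : o \in chi0 k -> o \in L b -> b != k ->
  wstable L psi -> exists2 phi, wstable L phi & (#|psi k| <= #|phi b|)%N.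
Proof.
move=> ok ob bk st_psi; have kb := connect1 (warc_liked ok ob bk).
have [le|lt] := leqP #|psi k| #|chi0 k|; first exact: wstable_raise chi0_stable kb le.
have [c [lt_c kc ck]] := wmax_exchange (wstable_wmax st_psi) (wstable_wmax chi0_stable) lt.
have := wstable_connect st_psi kc => le_kc.
by apply: wstable_raise chi0_stable (connect_trans ck kb) _; lia.
Qed.

Lemma liked_item_lower o k b psi : o \in chi0 k -> o \in L b -> b != k ->
  wstable L psi -> exists2 phi, wstable L phi & (#|phi k| <= #|psi b|)%N.
Proof.
move=> ok ob bk st_psi; have kb := connect1 (warc_liked ok ob bk).
have [le|lt] := leqP #|chi0 b| #|psi b|; first exact: wstable_lower chi0_stable kb le.
have [c [lt_c bc cb]] := wmax_exchange (wstable_wmax chi0_stable) (wstable_wmax st_psi) lt.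
have := wstable_connect st_psi cb => le_cb.
by apply: wstable_lower chi0_stable (connect_trans kb bc) _; lia.
Qed.

Lemma range_liked_item o k b lk hk lb hb : o \in chi0 k -> o \in L b ->
  size_range k lk hk -> size_range b lb hb -> (lk = lb /\ hk = hb) \/ (hk <= lb)%N.
Proof.
move=> ok ob rk rb; have [eq_bk|bk] := eqVneq b k.
  by left; subst b; apply: range_uniq rk rb.
have [within_k [psi1 [st1 e1]] [psi2 [st2 e2]]] := rk.
have [within_b [phi1 [t1 f1]] [phi2 [t2 f2]]] := rb.
have [phi st_phi le_hi] := liked_item_raise ok ob bk st2.
have [phi' st_phi' le_lo] := liked_item_lower ok ob bk t1.
have := within_b _ st_phi; have := within_k _ st_phi'.
by have := range_width rk; have := range_width rb; lia.
Qed.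

End SizeRanges.

Section SubInstance.
Variables (agent item : finType) (L : agent -> {set item}) (R : realDomainType).
Variable chi0 : agent -> {set item}.
Hypothesis chi0_stable : wstable L chi0.
Variable A : {set agent}.

Local Notation B := (\bigcup_(a in A) chi0 a).

Definition restrict (chi : agent -> {set item}) : agent -> {set item} :=
  fun a => if a \in A then chi a else set0.

Let c := indicator R (restrict chi0).

Let mem_restrict chi o a : (o \in restrict chi a) = (a \in A) && (o \in chi a).
Proof. by rewrite /restrict; case: (a \in A); rewrite ?inE. Qed.

Let row_restrict a : \sum_o c o a = (if a \in A then #|chi0 a| else 0%N)%:R.
Proof. by rewrite row_indicator /restrict; case: (a \in A); rewrite ?cards0. Qed.

Let chi0_disjoint : disjoint_bundles chi0.
Proof. by case: chi0_stable => -[]. Qed.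

Let restrict_disjoint : disjoint_bundles (restrict chi0).
Proof.
move=> i j ij; rewrite -setI_eq0 /restrict.
by case: (i \in A); case: (j \in A); rewrite ?set0I ?setI0 // setI_eq0 chi0_disjoint.
Qed.

Let sum_restrict o : o \in B -> \sum_i c o i = 1.
Proof.
case/bigcupP => k kA ok; rewrite sum_indicator //.
have -> // : [exists a, o \in restrict chi0 a].
by apply/existsP; exists k; rewrite mem_restrict kA.
Qed.

Variable x : item -> agent -> R.
Hypotheses (x_ge0 : forall o i, 0 <= x o i)
  (x_supp : forall o i, (i \notin A) || (o \notin B) -> x o i = 0)
  (x_cover : forall o, o \in B -> \sum_i x o i = 1).

Let sum_x_restrict o : \sum_i x o i = \sum_i c o i.
Proof.
have [oB|oB] := boolP (o \in B); first by rewrite x_cover // sum_restrict.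
rewrite !big1 // => i _; last by apply: x_supp; rewrite oB orbT.
rewrite /c /indicator mem_restrict; case: (boolP (i \in A)) => //= iA.
by case: (boolP (o \in chi0 i)) => // oi; case/negP: oB; apply/bigcupP; exists i.
Qed.

Let farc_restrict o p q :
  0 < x o p -> o \in chi0 q -> q \in A -> p != q -> farc L A B x p q.
Proof.
move=> xp oq qA pq; have pA : p \in A.
  by apply: contraTT xp => pA; rewrite x_supp ?pA // ltxx.
rewrite /farc pA qA pq; apply/existsP; exists o.
by rewrite xp !inE (wstable_clean chi0_stable oq) /=; apply/bigcupP; exists q.
Qed.

Let row_x_outside k : k \notin A -> \sum_o x o k = 0.
Proof. by move=> kA; rewrite big1 // => o _; rewrite x_supp ?kA. Qed.

(* x and chi0 restricted to A both hand out exactly one unit of each item of B,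
   so the exchange paths between them are paths of farc. *)
Lemma excess_reaches_deficit a : a \in A -> #|chi0 a|%:R < \sum_o x o a ->
  exists2 k, k \in A /\ \sum_o x o k < #|chi0 k|%:R & connect (farc L A B x) a k.
Proof.
move=> aA lt_a.
have col o : \sum_i x o i <= \sum_i c o i by rewrite sum_x_restrict.
have lt_row : \sum_o c o a < \sum_o x o a by rewrite row_restrict aA.
have [k lt_k ak] := exchange_deficit x_ge0 (indicator_ge0 R _) col lt_row.
have kA : k \in A.
  by apply: contraTT lt_k => kA; rewrite row_restrict (negbTE kA) row_x_outside // ltxx.
exists k; first by split=> //; move: lt_k; rewrite row_restrict kA.
apply: connect_sub ak => p q /andP[pq /existsP[o /andP[xp]]].
by rewrite indicator_gt0 mem_restrict => /andP[qA oq]; apply/connect1/(farc_restrict xp).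
Qed.

Lemma deficit_reached_from_excess a : a \in A -> \sum_o x o a < #|chi0 a|%:R ->
  exists2 k, k \in A /\ #|chi0 k|%:R < \sum_o x o k & connect (farc L A B x) k a.
Proof.
move=> aA lt_a.
have col o : \sum_i c o i <= \sum_i x o i by rewrite sum_x_restrict.
have lt_row : \sum_o x o a < \sum_o c o a by rewrite row_restrict aA.
have [k lt_k ak] := exchange_deficit (indicator_ge0 R _) x_ge0 col lt_row.
have kA : k \in A.
  by apply: contraTT lt_k => kA; rewrite row_restrict (negbTE kA) row_x_outside // ltxx.
exists k; first by split=> //; move: lt_k; rewrite row_restrict kA.
have := connect_rev (exchange c x) k a; rewrite /= ak => ka.
apply: connect_sub ka => q p /andP[pq /existsP[o /andP[cp xq]]].
move: cp; rewrite indicator_gt0 mem_restrict => /andP[pA op].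
by apply/connect1/(farc_restrict xq op pA); rewrite eq_sym.
Qed.

End SubInstance.

Section LayerBounds.
Variables (agent item : finType) (L : agent -> {set item}) (R : realType).
Variable chi0 : agent -> {set item}.
Hypothesis chi0_stable : wstable L chi0.

Lemma layer_istable_card d g : istable L (layer L d) (Layer L chi0 d) g ->
  forall a, a \in layer L d -> #|g a| = d.
Proof.
move=> st; have [[out sub D] _ M _] := st.
have size0 a : a \in layer L d -> #|chi0 a| = d by rewrite inE => /asboolP; apply.
have x_supp o i : (i \notin layer L d) || (o \notin Layer L chi0 d) -> indicator int g o i = 0.
  rewrite /indicator; case: (boolP (o \in g i)) => // oi /orP[iA|].
    by rewrite (out i iA) inE in oi.
  by rewrite (subsetP (sub i) o oi).
have x_cover o : o \in Layer L chi0 d -> \sum_i indicator int g o i = 1.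
  move=> oB; rewrite sum_indicator //; move: (oB) => /bigcupP[k kA ok].
  have [b ob] := imaxusw_cover (And3 out sub D) M oB kA (wstable_clean chi0_stable ok).
  by have -> : [exists a, o \in g a] by apply/existsP; exists b.
have conn u v : connect (farc L (layer L d) (Layer L chi0 d) (indicator int g)) u v ->
    (#|g u| <= #|g v| + 1)%N.
  by rewrite -(eq_connect (iarc_farc L int _ _ g)); apply: istable_connect.
have compare := excess_reaches_deficit chi0_stable (A := layer L d)
  (indicator_ge0 int g) x_supp x_cover.
have compare' := deficit_reached_from_excess chi0_stable (A := layer L d)
  (indicator_ge0 int g) x_supp x_cover.
move=> a aA; apply/eqP; rewrite eqn_leq; apply/andP; split; rewrite leqNgt; apply/negP => lt.
- have [|k [kA]] := compare a aA; first by rewrite row_indicator size0 // ltr_nat.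
  by rewrite row_indicator size0 // ltr_nat => lt_k /conn; lia.
- have [|k [kA]] := compare' a aA; first by rewrite row_indicator size0 // ltr_nat.
  by rewrite row_indicator size0 // ltr_nat => lt_k /conn; lia.
Qed.

Lemma layerm_fstable_fh d (x : item -> agent -> R) :
  fstable L (layerm L d.+1) (Layerm L chi0 d.+1) x ->
  forall a, a \in layerm L d.+1 -> d%:R <= fh x a <= d.+1%:R.
Proof.
move=> st; have [al _ M _] := st; have [x_ge0 _ x_supp] := al.
have size0 a : a \in layerm L d.+1 -> (d <= #|chi0 a| <= d.+1)%N.
  by move=> /layerm_range[/(_ _ chi0_stable)].
have x_cover o : o \in Layerm L chi0 d.+1 -> \sum_i x o i = 1.
  move=> oB; move: (oB) => /bigcupP[k kA ok].
  exact: fmaxusw_cover al M oB kA (wstable_clean chi0_stable ok).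
have compare := excess_reaches_deficit chi0_stable (A := layerm L d.+1) x_ge0 x_supp x_cover.
have compare' :=
  deficit_reached_from_excess chi0_stable (A := layerm L d.+1) x_ge0 x_supp x_cover.
move=> a aA; have /andP[lo_a hi_a] := size0 a aA.
apply/andP; split; rewrite leNgt; apply/negP => lt.
- have [|k [kA lt_k] ka] := compare' a aA.
    by apply: lt_le_trans lt _; rewrite ler_nat.
  have := fstable_connect st ka; have /andP[lo_k _] := size0 k kA.
  have : d%:R <= #|chi0 k|%:R :> R by rewrite ler_nat.
  by move: lt lt_k; rewrite /fh; lra.
- have [|k [kA lt_k] ak] := compare a aA.
    by apply: le_lt_trans lt; rewrite ler_nat.
  have := fstable_connect st ak; have /andP[_ hi_k] := size0 k kA.
  have : #|chi0 k|%:R <= d.+1%:R :> R by rewrite ler_nat.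
  by move: lt lt_k; rewrite /fh; lra.
Qed.

End LayerBounds.

Lemma sum_nat_single (V : nmodType) (F : nat -> V) n k :
  (k < n)%N -> (forall j, j != k -> F j = 0) -> \sum_(0 <= j < n) F j = F k.
Proof.
move=> lt_kn F0; rewrite (bigD1_seq k) ?mem_index_iota ?iota_uniq //=.
by rewrite big1 ?addr0 // => j /F0.
Qed.

(* [Mixed d] stands for layer^-_(d+1), the agents whose stable sizes are d and d+1. *)
Variant stratum := Exact of nat | Mixed of nat.

Definition stratum_code s := match s with Exact d => inl d | Mixed d => inr d end.

Definition stratum_decode (c : nat + nat) :=
  match c with inl d => Exact d | inr d => Mixed d end.

Lemma stratum_codeK : cancel stratum_code stratum_decode.
Proof. by case. Qed.

HB.instance Definition _ := Equality.copy stratum (can_type stratum_codeK).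

Section Combination.
Variables (agent item : finType) (L : agent -> {set item}) (R : realType).
Variable chi0 : agent -> {set item}.
Hypothesis chi0_stable : wstable L chi0.
Variables (gam : nat -> agent -> {set item}) (gamm : nat -> item -> agent -> R).
Hypothesis gam_stable : forall d, istable L (layer L d) (Layer L chi0 d) (gam d).
Hypothesis gamm_stable :
  forall d, (1 <= d)%N -> fstable L (layerm L d) (Layerm L chi0 d) (gamm d).

Definition stratum_lo s := match s with Exact d | Mixed d => d end.

Definition stratum_hi s := match s with Exact d => d | Mixed d => d.+1 end.

Definition stratum_agents s :=
  match s with Exact d => layer L d | Mixed d => layerm L d.+1 end.

Definition stratum_items s :=
  match s with Exact d => Layer L chi0 d | Mixed d => Layerm L chi0 d.+1 end.

Definition stratum_alloc s : item -> agent -> R :=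
  match s with Exact d => indicator R (gam d) | Mixed d => gamm d.+1 end.

Let gamm_stableS d : fstable L (layerm L d.+1) (Layerm L chi0 d.+1) (gamm d.+1).
Proof. exact: gamm_stable. Qed.

Lemma stratum_inj s s' :
  stratum_lo s = stratum_lo s' -> stratum_hi s = stratum_hi s' -> s = s'.
Proof. by case: s => d; case: s' => d' /= -> //; lia. Qed.

Lemma stratum_range a s :
  a \in stratum_agents s -> size_range L a (stratum_lo s) (stratum_hi s).
Proof. by case: s => d aA; [exact (layer_range chi0_stable aA) | exact (layerm_range aA)]. Qed.

Lemma stratum_uniq a s s' : a \in stratum_agents s -> a \in stratum_agents s' -> s = s'.
Proof.
move=> /stratum_range ra /stratum_range ra'.
by have [] := range_uniq ra ra'; apply: stratum_inj.
Qed.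

Lemma stratum_exists a : exists s, a \in stratum_agents s.
Proof.
have [lo [hi r]] := range_exists chi0_stable a.
have /andP[le_hi hi_le] := range_width r.
have [e|ne] := eqVneq lo hi; first by exists (Exact lo); apply: range_layer; rewrite {2}e.
have e : hi = lo.+1 by lia.
by exists (Mixed lo); apply: range_layerm; rewrite -e.
Qed.

Lemma stratum_hi_le a s : a \in stratum_agents s -> (stratum_hi s <= #|item|)%N.
Proof. by move=> /stratum_range[_ _ [psi [_ <-]]]; apply: max_card. Qed.

Lemma stratum_alloc_ge0 s o i : 0 <= stratum_alloc s o i.
Proof.
case: s => d /=; first exact: indicator_ge0.
by have [[x_ge0 _ _] _ _ _] := gamm_stableS d.
Qed.

Lemma stratum_alloc_out s o i : i \notin stratum_agents s -> stratum_alloc s o i = 0.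
Proof.
case: s => d /= iA.
  by have [[out _ _] _ _ _] := gam_stable d; rewrite /indicator (out i iA) inE.
by have [[_ _ supp] _ _ _] := gamm_stableS d; rewrite supp ?iA.
Qed.

Lemma stratum_alloc_unowned s o i : o \notin stratum_items s -> stratum_alloc s o i = 0.
Proof.
case: s => d /= oB; last by have [[_ _ supp] _ _ _] := gamm_stableS d; rewrite supp ?oB ?orbT.
have [[_ sub _] _ _ _] := gam_stable d; rewrite /indicator.
by case: (boolP (o \in gam d i)) => // /(subsetP (sub i)); rewrite (negbTE oB).
Qed.

Lemma stratum_alloc_clean s o i : o \notin L i -> stratum_alloc s o i = 0.
Proof.
have [iA|/stratum_alloc_out//] := boolP (i \in stratum_agents s).
case: s iA => d /= iA oL.
  have [_ cl _ _] := gam_stable d; rewrite /indicator.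
  by case: (boolP (o \in gam d i)) => // /(subsetP (cl i iA)); rewrite inE (negbTE oL).
by have [_ cl _ _] := gamm_stableS d; rewrite cl // inE negb_and oL.
Qed.

Lemma stratum_owner s o : o \in stratum_items s ->
  exists2 k, k \in stratum_agents s & o \in chi0 k.
Proof. by case: s => d /= /bigcupP[k]; exists k. Qed.

Lemma sum_stratum_alloc s o k : o \in chi0 k -> k \in stratum_agents s ->
  \sum_i stratum_alloc s o i = 1.
Proof.
move=> ok kA; have oL := wstable_clean chi0_stable ok.
case: s kA => d /= kA.
- have [[out sub D] _ M _] := gam_stable d.
  have oB : o \in Layer L chi0 d by apply/bigcupP; exists k.
  have [b ob] := imaxusw_cover (And3 out sub D) M oB kA oL.
  by rewrite sum_indicator //; have -> : [exists a, o \in gam d a] by apply/existsP; exists b.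
- have [al _ M _] := gamm_stableS d.
  have oB : o \in Layerm L chi0 d.+1 by apply/bigcupP; exists k.
  exact: fmaxusw_cover al M oB kA oL.
Qed.

Lemma fh_stratum_alloc a s : a \in stratum_agents s ->
  (stratum_lo s)%:R <= fh (stratum_alloc s) a <= (stratum_hi s)%:R.
Proof.
case: s => d /= aA; last exact (layerm_fstable_fh chi0_stable (gamm_stableS d) aA).
by rewrite /fh row_indicator (layer_istable_card chi0_stable (gam_stable d) aA) lexx.
Qed.

Lemma stratum_alloc_arc s a b o : a \in stratum_agents s -> b \in stratum_agents s ->
  a != b -> 0 < stratum_alloc s o a -> o \in L b -> o \in stratum_items s ->
  fh (stratum_alloc s) a <= fh (stratum_alloc s) b.
Proof.
move=> aA bA ab xa ob oB; have := fh_stratum_alloc aA; have := fh_stratum_alloc bA.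
case: s aA bA xa oB => d /= aA bA xa oB.
  by move=> /andP[lo_b _] /andP[_ hi_a]; apply: le_trans hi_a lo_b.
move=> _ _; apply: fstable_arc (gamm_stableS d) _.
by rewrite /farc aA bA ab; apply/existsP; exists o; rewrite xa !inE ob.
Qed.


Local Notation gamma := (combine gam gamm).

Let chi0_disjoint : disjoint_bundles chi0.
Proof. by case: chi0_stable => -[]. Qed.

Lemma combine_stratum a s o : a \in stratum_agents s -> gamma o a = stratum_alloc s o a.
Proof.
move=> aA; have hi_le := stratum_hi_le aA.
have other s' : s' != s -> stratum_alloc s' o a = 0.
  move=> ne; apply: stratum_alloc_out.
  by apply: contra ne => aA'; rewrite (stratum_uniq aA' aA).
rewrite /combine big_add1 /=.
rewrite -[X in X + _]/(\sum_(0 <= d < #|item|.+1) stratum_alloc (Exact d) o a).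
rewrite -[X in _ + X]/(\sum_(0 <= d < #|item|) stratum_alloc (Mixed d) o a).
case: s aA hi_le other => d _ hi_le other; rewrite /= in hi_le.
- rewrite (@sum_nat_single _ (fun j => stratum_alloc (Exact j) o a) _ d) ?ltnS //.
    by rewrite big1 ?addr0 // => j _; apply: other.
  by move=> j dj; apply: other; apply: contra_neq dj => -[].
- rewrite (@sum_nat_single _ (fun j => stratum_alloc (Mixed j) o a) _ d) //.
    by rewrite big1 ?add0r // => j _; apply: other.
  by move=> j dj; apply: other; apply: contra_neq dj => -[].
Qed.

Lemma combine_owned o k s i : o \in chi0 k -> k \in stratum_agents s ->
  gamma o i = stratum_alloc s o i.
Proof.
move=> ok kA; have [s' iA'] := stratum_exists i; rewrite (combine_stratum o iA').
have [->//|ne] := eqVneq s' s.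
rewrite [RHS]stratum_alloc_out; last by apply: contra ne => iA; rewrite (stratum_uniq iA' iA).
apply: stratum_alloc_unowned; apply: contra ne => /stratum_owner[j jA' oj].
by rewrite (disjoint_bundles_eq chi0_disjoint oj ok) in jA'; rewrite (stratum_uniq jA' kA).
Qed.

Lemma combine_unowned o i : (forall k, o \notin chi0 k) -> gamma o i = 0.
Proof.
move=> unowned; have [s iA] := stratum_exists i; rewrite (combine_stratum o iA).
by apply: stratum_alloc_unowned; apply/negP => /stratum_owner[k _]; apply/negP.
Qed.

Lemma sum_combine o : \sum_i gamma o i = ([exists a, o \in L a] : nat)%:R.
Proof.
have [k ok|unowned] := pickP (fun k => o \in chi0 k).
  have -> : [exists a, o \in L a] by apply/existsP; exists k; apply: wstable_clean ok.
  have [s kA] := stratum_exists k.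
  by rewrite (eq_bigr _ (fun i _ => combine_owned i ok kA)) (sum_stratum_alloc ok kA).
have -> : [exists a, o \in L a] = false.
  apply/negbTE/existsP => -[a oa]; have [al _ M _] := chi0_stable.
  by have [b] := imaxusw_cover al M (in_setT o) (in_setT a) oa; rewrite unowned.
by rewrite big1 // => i _; apply: combine_unowned => k; rewrite unowned.
Qed.

Lemma combine_ge0 o i : 0 <= gamma o i.
Proof.
by have [s iA] := stratum_exists i; rewrite (combine_stratum o iA) stratum_alloc_ge0.
Qed.

Lemma combine_clean o i : o \notin L i -> gamma o i = 0.
Proof.
by have [s iA] := stratum_exists i; rewrite (combine_stratum o iA); apply: stratum_alloc_clean.
Qed.

Lemma fusw_whole (x : item -> agent -> R) :
  fusw L [set: agent] [set: item] x = \sum_o \sum_i (o \in L i)%:R * x o i.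
Proof.
rewrite exchange_big; apply: eq_big => [i|i _]; first by rewrite inE.
rewrite big_mkcond; apply: eq_bigr => o _.
by rewrite !inE andbT; case: (o \in L i); rewrite ?mul1r ?mul0r.
Qed.

Lemma combine_falloc : falloc [set: agent] [set: item] gamma.
Proof.
split=> [|o|o i]; rewrite ?inE //; first exact: combine_ge0.
rewrite (eq_bigl xpredT) ?sum_combine => [|i]; last by rewrite inE.
by case: [exists a, o \in L a]; rewrite ?ler01 ?lexx.
Qed.

Lemma combine_fmaxusw : fmaxusw L [set: agent] [set: item] gamma.
Proof.
move=> y [y_ge0 y_le1 _]; rewrite !fusw_whole; apply: ler_sum => o _.
have -> : \sum_i (o \in L i)%:R * gamma o i = \sum_i gamma o i.
  apply: eq_bigr => i _; case: (boolP (o \in L i)) => oL; first by rewrite mul1r.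
  by rewrite combine_clean // mulr0.
rewrite sum_combine; case: (boolP [exists a, o \in L a]) => [_|none].
  apply: le_trans (_ : \sum_i y o i <= 1); last first.
    by rewrite -(eq_bigl _ _ (fun i => in_setT i)); apply: y_le1.
  by apply: ler_sum => i _; case: (o \in L i); rewrite ?mul1r ?mul0r.
rewrite big1 // => i _.
have /negbTE-> : o \notin L i by apply: contra none => oL; apply/existsP; exists i.
by rewrite mul0r.
Qed.

Lemma fh_combine a s : a \in stratum_agents s -> fh gamma a = fh (stratum_alloc s) a.
Proof. by move=> aA; apply: eq_bigr => o _; rewrite (combine_stratum o aA). Qed.

(* An item that gamma gives to a is owned under chi0 by some k in a's stratum,
   so the strata of a and b are equal or the one of b lies entirely above. *)
Lemma combine_arc a b o : a != b -> 0 < gamma o a -> o \in L b -> fh gamma a <= fh gamma b.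
Proof.
move=> ab xa ob.
have [sa aA] := stratum_exists a; have [sb bA] := stratum_exists b.
rewrite (combine_stratum o aA) in xa; rewrite (fh_combine aA) (fh_combine bA).
have oB : o \in stratum_items sa.
  by apply: contraTT xa => oB; rewrite stratum_alloc_unowned // ltxx.
have [k kA ok] := stratum_owner oB.
have [[lo_eq hi_eq]|hi_le_lo] :=
  range_liked_item chi0_stable ok ob (stratum_range kA) (stratum_range bA).
  have e := stratum_inj lo_eq hi_eq; subst sb.
  exact: stratum_alloc_arc aA bA ab xa ob oB.
have /andP[_ hi_a] := fh_stratum_alloc aA; have /andP[lo_b _] := fh_stratum_alloc bA.
by apply: le_trans hi_a (le_trans _ lo_b); rewrite ler_nat.
Qed.

Lemma combine_transfer_le s u : uniq (u :: map snd s) ->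
  (forall a o b, (a, (o, b)) \in zip (u :: map snd s) s -> 0 < gamma o a /\ o \in L b) ->
  fh gamma u <= fh gamma (last u (map snd s)).
Proof.
elim: s u => [|[o b] s IH] u /=; first by rewrite lexx.
case/andP; rewrite inE negb_or => /andP[ub _] uq steps.
have [xa ob] := steps u o b (mem_head _ _).
apply: le_trans (combine_arc ub xa ob) (IH _ uq _) => a o' b' step.
by apply: steps; rewrite inE step orbT.
Qed.

Theorem combine_fstable : fstable L [set: agent] [set: item] gamma.
Proof.
split; [exact: combine_falloc | | exact: combine_fmaxusw | ].
  by move=> o i; rewrite !inE andbT; apply: combine_clean.
move=> u v D [s [[_ uq <- _ D_gt0] steps]].
have : fh gamma u <= fh gamma (last u (map snd s)).
  apply: (combine_transfer_le uq) => a o b /steps[xa [_]].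
  by rewrite !inE andbT.
lra.
Qed.

End Combination.

Theorem lemma6 (R : realType) (n m : nat) (L : 'I_n -> {set 'I_m})
  (chi0 : 'I_n -> {set 'I_m}) (Hchi0 : wstable L chi0)
  (gam : nat -> 'I_n -> {set 'I_m}) (gamm : nat -> 'I_m -> 'I_n -> R)
  (Hgam : forall d : nat, istable L (layer L d) (Layer L chi0 d) (gam d))
  (Hgamm : forall d : nat, (1 <= d)%N ->
     fstable L (layerm L d) (Layerm L chi0 d) (gamm d)) :
  fstable L setT setT (combine gam gamm).
Proof. exact: (combine_fstable Hchi0 Hgam Hgamm). Qed.
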